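(* For every problem $\alpha$ of QHC, $\neg\nabla\alpha\Leftrightarrow\neg\alpha\Leftrightarrow\nabla\neg\alpha$.
   Context: QHC is a two-sorted first-order calculus. Its only terms are individual variables. Every formula is either a problem (denoted by Greek letters $\alpha,\beta,\gamma,\dots$) or a proposition (denoted by Latin letters $p,q,\dots$). Atomic formulas are proposition variables $p(t_1,\dots,t_n)$ (of proposition type), problem variables $\pi(t_1,\dots,t_n)$ (of problem type), and the constants $0$ (a proposition, classical falsity) and $\bot$ (a problem, intuitionistic absurdity). Propositions are closed under the classical connectives $\land,\lor,\to$ and quantifiers $\exists,\forall$; problems are closed under the intuitionistic connectives $\land,\lor,\to$ and quantifiers $\exists,\forall$ (the same symbols are used, distinguished by the type of the arguments). $\neg p$ abbreviates $p\to 0$, $\neg\alpha$ abbreviates $\alpha\to\bot$, and $\leftrightarrow$ is defined as usual. There are two type-conversion operators: if $p$ is a proposition then $!p$ is a problem, and if $\alpha$ is a problem then $?\alpha$ is a proposition. Deductive system of QHC: all axioms and rules of classical predicate logic applied to all propositions; all postulates and rules of intuitionistic predicate logic applied to all problems; the rules $p\,/\,!p$ and $\alpha\,/\,?\alpha$; and the schemas $?!p\to p$; $\alpha\to\, !?\alpha$; $!(p\to q)\to(!p\to !q)$; $?(\alpha\to\beta)\to(?\alpha\to ?\beta)$; $!0\to\bot$; $?(\alpha\land\beta)\leftrightarrow ?\alpha\land ?\beta$; $?(\alpha\lor\beta)\leftrightarrow ?\alpha\lor ?\beta$; $?\bot\to 0$; $?\exists x\,\alpha(x)\leftrightarrow\exists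 x\,?\alpha(x)$; $?\forall x\,\alpha(x)\to\forall x\,?\alpha(x)$ (usual variable side conditions implicit). $\vdash A$ means $A$ is derivable in QHC; $A\Rightarrow B$ means $\vdash A\to B$ and $A\Leftrightarrow B$ means $\vdash A\leftrightarrow B$ (with $A,B$ of the same type); $A\vdash B$ means $B$ is derivable in QHC from the premise $A$. Notation: $\Box p := ?!p$ (a proposition) and $\nabla\alpha := !?\alpha$ (a problem). QC and QH denote classical and intuitionistic predicate calculus. *)

(* Deep embedding of the two-sorted calculus QHC.
   Individual variables are de Bruijn indices (nat); the only terms are
   variables, so substitution of terms for variables is a renaming. *)
From Stdlib Require Import List.

Inductive sort : Type := Prp | Prb .

Inductive form : sort -> Type :=
| Atom : forall s : sort, nat -> list nat -> form s
    (* Atom Prp p ts = proposition variable p(ts); Atom Prb pi ts = problem variable *)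
| Zero : form Prp
| Bot  : form Prb
| And  : forall s, form s -> form s -> form s
| Or   : forall s, form s -> form s -> form s
| Imp  : forall s, form s -> form s -> form s
| Ex   : forall s, form s -> form s           (* binds de Bruijn index 0 *)
| All  : forall s, form s -> form s
| Bang : form Prp -> form Prb
| Ques : form Prb -> form Prp.

Arguments And {s} _ _.
Arguments Or {s} _ _.
Arguments Imp {s} _ _.
Arguments Ex {s} _.
Arguments All {s} _.

Definition up (f : nat -> nat) : nat -> nat :=
  fun n => match n with 0 => 0 | S k => S (f k) end.

Fixpoint ren {s} (f : nat -> nat) (A : form s) : form s :=
  match A with
  | Atom s p ts => Atom s p (map f ts)
  | Zero => Zero
  | Bot => Bot
  | And A B => And (ren f A) (ren f B)
  | Or A B => Or (ren f A) (ren f B)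
  | Imp A B => Imp (ren f A) (ren f B)
  | Ex A => Ex (ren (up f) A)
  | All A => All (ren (up f) A)
  | Bang A => Bang (ren f A)
  | Ques A => Ques (ren f A)
  end.

Definition lift {s} (A : form s) : form s := ren S A.
Definition inst {s} (t : nat) (A : form s) : form s :=
  ren (fun n => match n with 0 => t | S k => k end) A.

Definition fal (s : sort) : form s :=
  match s with Prp => Zero | Prb => Bot end.
Definition Neg {s} (A : form s) : form s := Imp A (fal s).
Definition Iff {s} (A B : form s) : form s := And (Imp A B) (Imp B A).

Definition Box (p : form Prp) : form Prp := Ques (Bang p).
Definition Nabla (a : form Prb) : form Prb := Bang (Ques a).

(* Derivability in QHC (Hilbert style).  Intuitionistic predicate logic for
   both sorts, plus double negation elimination for propositions (classical
   logic), plus the QHC rules and schemas. *)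
Inductive Prv : forall s, form s -> Prop :=
| ax_K   : forall s (A B : form s), Prv s (Imp A (Imp B A))
| ax_S   : forall s (A B C : form s),
    Prv s (Imp (Imp A B) (Imp (Imp A (Imp B C)) (Imp A C)))
| ax_andE1 : forall s (A B : form s), Prv s (Imp (And A B) A)
| ax_andE2 : forall s (A B : form s), Prv s (Imp (And A B) B)
| ax_andI  : forall s (A B : form s), Prv s (Imp A (Imp B (And A B)))
| ax_orI1  : forall s (A B : form s), Prv s (Imp A (Or A B))
| ax_orI2  : forall s (A B : form s), Prv s (Imp B (Or A B))
| ax_orE   : forall s (A B C : form s),
    Prv s (Imp (Imp A C) (Imp (Imp B C) (Imp (Or A B) C)))
| ax_efq   : forall s (A : form s), Prv s (Imp (fal s) A)
| ax_dne   : forall (A : form Prp), Prv Prp (Imp (Neg (Neg A)) A)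
| ax_allE  : forall s (A : form s) (t : nat), Prv s (Imp (All A) (inst t A))
| ax_exI   : forall s (A : form s) (t : nat), Prv s (Imp (inst t A) (Ex A))
| r_mp     : forall s (A B : form s), Prv s (Imp A B) -> Prv s A -> Prv s B
| r_allI   : forall s (C A : form s), Prv s (Imp (lift C) A) -> Prv s (Imp C (All A))
| r_exE    : forall s (C A : form s), Prv s (Imp A (lift C)) -> Prv s (Imp (Ex A) C)
| r_bang   : forall p, Prv Prp p -> Prv Prb (Bang p)
| r_ques   : forall a, Prv Prb a -> Prv Prp (Ques a)
| ax_qb    : forall p, Prv Prp (Imp (Ques (Bang p)) p)
| ax_bq    : forall a, Prv Prb (Imp a (Bang (Ques a)))
| ax_bK    : forall p q, Prv Prb (Imp (Bang (Imp p q)) (Imp (Bang p) (Bang q)))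
| ax_qK    : forall a b, Prv Prp (Imp (Ques (Imp a b)) (Imp (Ques a) (Ques b)))
| ax_b0    : Prv Prb (Imp (Bang Zero) Bot)
| ax_qand  : forall a b, Prv Prp (Iff (Ques (And a b)) (And (Ques a) (Ques b)))
| ax_qor   : forall a b, Prv Prp (Iff (Ques (Or a b)) (Or (Ques a) (Ques b)))
| ax_qbot  : Prv Prp (Imp (Ques Bot) Zero)
| ax_qex   : forall a, Prv Prp (Iff (Ques (Ex a)) (Ex (Ques a)))
| ax_qall  : forall a, Prv Prp (Imp (Ques (All a)) (All (Ques a))).

Arguments Prv {s} _.


(* Write [nec] for the schema [α → ∇α] (ax_bq).
   1. A few derived rules of the Hilbert calculus, valid in both sorts:
      weakening, reflexivity and transitivity of [→] (also under a
      hypothesis), and monotonicity of [→] in each argument.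
   2. The two conversion operators commute with negation in one direction:
      [?¬α → ¬?α] by the K-schema for [?] and [?⊥ → 0], and
      [!¬p → ¬!p] by the K-schema for [!] and [!0 → ⊥].  Composing them
      (the second applied to [p := ?α], the first lifted through [!])
      gives the key fact [∇¬α → ¬∇α].
   3. The theorem: [¬∇α → ¬α] is the contrapositive of [nec α], and
      [¬α → ∇¬α → ¬∇α] by [nec ¬α] and the key fact; [¬α → ∇¬α] is
      [nec ¬α], and [∇¬α → ¬∇α → ¬α] by the key fact and [nec α]. *)

Section HilbertRules.
Variable s : sort.
Implicit Types A B C H : form s.

Lemma imp_const A B : Prv B -> Prv (Imp A B).
Proof. intro hB. exact (r_mp _ _ _ (ax_K _ B A) hB). Qed.

Lemma imp_mp_under H A B :
  Prv (Imp H (Imp A B)) -> Prv (Imp H A) -> Prv (Imp H B).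
Proof. intros hAB hA. exact (r_mp _ _ _ (r_mp _ _ _ (ax_S _ H A B) hA) hAB). Qed.

Lemma imp_refl A : Prv (Imp A A).
Proof. apply (imp_mp_under A (Imp A A) A); apply ax_K. Qed.

Lemma imp_trans_under H A B C :
  Prv (Imp H (Imp A B)) -> Prv (Imp H (Imp B C)) -> Prv (Imp H (Imp A C)).
Proof.
  intros hAB hBC.
  assert (hABC : Prv (Imp H (Imp A (Imp B C)))).
  { exact (imp_mp_under _ _ _ (imp_const _ _ (ax_K _ (Imp B C) A)) hBC). }
  exact (imp_mp_under _ _ _
           (imp_mp_under _ _ _ (imp_const _ _ (ax_S _ A B C)) hAB) hABC).
Qed.

Lemma imp_trans A B C : Prv (Imp A B) -> Prv (Imp B C) -> Prv (Imp A C).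
Proof. intros hAB hBC. exact (imp_mp_under A B C (imp_const _ _ hBC) hAB). Qed.

Lemma imp_mono_r A B C : Prv (Imp B C) -> Prv (Imp (Imp A B) (Imp A C)).
Proof. intro hBC. apply (imp_trans_under _ _ B); [apply imp_refl | apply imp_const, hBC]. Qed.

Lemma imp_anti_l A B C : Prv (Imp A B) -> Prv (Imp (Imp B C) (Imp A C)).
Proof. intro hAB. apply (imp_trans_under _ _ B); [apply imp_const, hAB | apply imp_refl]. Qed.

Lemma iff_intro A B : Prv (Imp A B) -> Prv (Imp B A) -> Prv (Iff A B).
Proof. intros hAB hBA. exact (r_mp _ _ _ (r_mp _ _ _ (ax_andI _ _ _) hAB) hBA). Qed.

End HilbertRules.

Lemma ques_neg (a : form Prb) : Prv (Imp (Ques (Neg a)) (Neg (Ques a))).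
Proof. apply (imp_trans _ _ _ _ (ax_qK a Bot)), imp_mono_r, ax_qbot. Qed.

Lemma bang_mono (p q : form Prp) : Prv (Imp p q) -> Prv (Imp (Bang p) (Bang q)).
Proof. intro hpq. exact (r_mp _ _ _ (ax_bK p q) (r_bang _ hpq)). Qed.

Lemma bang_neg (p : form Prp) : Prv (Imp (Bang (Neg p)) (Neg (Bang p))).
Proof. apply (imp_trans _ _ _ _ (ax_bK p Zero)), imp_mono_r, ax_b0. Qed.

Lemma nabla_neg (a : form Prb) : Prv (Imp (Nabla (Neg a)) (Neg (Nabla a))).
Proof. exact (imp_trans _ _ _ _ (bang_mono _ _ (ques_neg a)) (bang_neg (Ques a))). Qed.

Theorem corollary2p10 (a : form Prb) :
  Prv (Iff (Neg (Nabla a)) (Neg a)) /\ Prv (Iff (Neg a) (Nabla (Neg a))).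
Proof.
  split; apply iff_intro.
  - (* contrapositive of [α → ∇α] *)
    apply imp_anti_l, ax_bq.
  - (* [¬α → ∇¬α → ¬∇α] *)
    exact (imp_trans _ _ _ _ (ax_bq (Neg a)) (nabla_neg a)).
  - apply ax_bq.
  - (* [∇¬α → ¬∇α → ¬α], the latter by contraposition of [α → ∇α] *)
    exact (imp_trans _ _ _ _ (nabla_neg a) (imp_anti_l _ _ _ _ (ax_bq a))).
Qed.
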